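(* For every integer $n \geq 1$, $$B_n = -\sum_{k=1}^{n} \frac{n}{k}\, S(n-1,k-1)\, B_k^*.$$
   Context: For $n \geq 0$, $X^{\underline{n}} := X(X-1)\cdots(X-n+1)$ ($X^{\underline{0}}=1$). The Stirling numbers of the second kind $S(n,k)$ are defined by $X^n = \sum_{k=0}^{n} S(n,k) X^{\underline{k}}$ for all $n\ge 0$, with $S(n,k)=0$ when $n<k$. The Bernoulli numbers $B_n$ are defined by $\frac{t}{e^t-1} = \sum_{n\ge 0} B_n \frac{t^n}{n!}$. The Bernoulli numbers of the second kind $B_n^*$ are defined by $\frac{t}{\log(1+t)} = \sum_{n \ge 0} B_n^* \frac{t^n}{n!}$ (equivalently $B_n^* = \int_0^1 x^{\underline{n}}\,dx$). *)

From mathcomp Require Import all_boot all_order all_algebra.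
Set Implicit Arguments. Unset Strict Implicit. Unset Printing Implicit Defensive.
Import Order.TTheory GRing.Theory Num.Theory.
Local Open Scope ring_scope.

Definition ffact_poly (n : nat) : {poly rat} :=
  \prod_(i < n) ('X - (i%:R)%:P).

(* Definite integral over [0,1] of a polynomial: sum_i p_i / (i+1). *)
Definition int01 (p : {poly rat}) : rat :=
  \sum_(i < size p) p`_i / (i.+1)%:R.

(* Bernoulli numbers of the second kind: B*_n = int_0^1 x^(falling n) dx. *)
Definition bernoulli2 (n : nat) : rat := int01 (ffact_poly n).

Definition is_stirling2 (S : nat -> nat -> rat) : Prop :=
  (forall n : nat, 'X^n = \sum_(k < n.+1) S n k *: ffact_poly k) /\
  (forall n k : nat, (n < k)%N -> S n k = 0).

(* B is the Bernoulli sequence, defined by t/(e^t-1) = sum_n B_n t^n/n! as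
   formal power series, i.e. (sum_n B_n t^n/n!) * ((e^t-1)/t) = 1 where
   (e^t-1)/t = sum_m t^m/(m+1)!; coefficientwise: *)
Definition is_bernoulli (B : nat -> rat) : Prop :=
  forall n : nat,
    \sum_(k < n.+1) B k / (k`!)%:R * (1 / (((n - k).+1)`!)%:R)
    = (n == 0%N)%:R.

(* Both [sum_j S(p,j)/(j+1) * X(X-1)...(X-j)] and the Faulhaber polynomial
   [sum_k C(p+1,k) B_k X^(p+1-k) / (p+1)] vanish at 0 and have forward
   difference [X^p], so they agree at every natural number and are equal.
   Integrating both over [0,1] gives [sum_j S(p,j) B*_(j+1) / (j+1)] on one
   side and, by the recurrence [sum_(k<=m) C(m+1,k) B_k = (m == 0)], the value
   [- B_(p+1) / (p+1)] on the other. *)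

From HB Require Import structures.
From mathcomp Require Import all_boot all_order all_algebra.
From mathcomp Require Import ring zify.
Import GRing.Theory Num.Theory.

Lemma mul_bin_subC (n k i : nat) :
  ('C(n, k) * 'C(n - k, i) = 'C(n, i) * 'C(n - i, k))%N.
Proof.
have vanish j l : (n < j + l)%N -> ('C(n, j) * 'C(n - j, l) = 0)%N.
  move=> ltn; case: (leqP j n) => hj; last by rewrite bin_small.
  by rewrite [X in (_ * X)%N]bin_small ?muln0 //; lia.
have trinomial j l : (j + l <= n)%N ->
    ('C(n, j) * 'C(n - j, l) * (j`! * (l`! * (n - j - l)`!)) = n`!)%N.
  move=> le; have hj : (j <= n)%N by lia.
  have hl : (l <= n - j)%N by lia.
  by rewrite -(bin_fact hj) -(bin_fact hl); ring.
case: (leqP (k + i) n) => le; last by rewrite !vanish // addnC.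
apply/eqP; rewrite -(@eqn_pmul2r (k`! * (i`! * (n - k - i)`!))); last first.
  by rewrite !muln_gt0 !fact_gt0.
by rewrite trinomial // -(trinomial i k) 1?addnC // subnAC; apply/eqP; ring.
Qed.

Local Open Scope ring_scope.

Lemma int01_widen (p : {poly rat}) (N : nat) : (size p <= N)%N ->
  int01 p = \sum_(i < N) p`_i / (i.+1)%:R.
Proof.
move=> hN; rewrite /int01 (big_ord_widen _ (fun i => p`_i / (i.+1)%:R) hN).
rewrite big_mkcond /=; apply: eq_bigr => i _.
by case: ltnP => // le; rewrite nth_default // mul0r.
Qed.

Lemma int01_is_scalar : scalar int01.
Proof.
move=> a p q; set N := maxn (size p) (size q).
rewrite (@int01_widen p N) ?leq_maxl // (@int01_widen q N) ?leq_maxr //.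
have size_le : (size (a *: p + q)%R <= N)%N.
  rewrite (leq_trans (size_polyD _ _)) // geq_max leq_maxr andbT.
  exact: leq_trans (size_scale_leq _ _) (leq_maxl _ _).
rewrite (int01_widen _ _ size_le).
rewrite mulr_sumr -big_split /=; apply: eq_bigr => i _.
by rewrite coefD coefZ mulrDl mulrA.
Qed.

HB.instance Definition _ :=
  GRing.isLinear.Build rat {poly rat} rat *%R int01 int01_is_scalar.

Lemma int01Xn k : int01 'X^k = (k.+1)%:R^-1.
Proof.
rewrite /int01 size_polyXn big_ord_recr /= big1 ?add0r; last first.
  by move=> i _; rewrite coefXn (ltn_eqF (ltn_ord i)) mul0r.
by rewrite coefXn eqxx div1r.
Qed.

Lemma poly_eq_forward_diff (R : numDomainType) (p q : {poly R}) :
  p.[0] = q.[0] ->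
  (forall m : nat, p.[m%:R + 1] - p.[m%:R] = q.[m%:R + 1] - q.[m%:R]) ->
  p = q.
Proof.
move=> eq0 eq_diff; apply/eqP; rewrite -subr_eq0; apply/eqP.
have root_nat m : root (p - q) m%:R.
  rewrite /root !hornerE subr_eq0; apply/eqP.
  elim: m => [|m IHm]; first exact: eq0.
  by rewrite -natr1 -[p.[_]](subrK p.[m%:R]) eq_diff IHm subrK.
apply: (@roots_geq_poly_eq0 _ _ [seq i%:R | i <- iota 0 (size (p - q))]).
- by apply/allP => _ /mapP [m _ ->].
- by rewrite map_inj_uniq ?iota_uniq // => a b /eqP; rewrite eqr_nat => /eqP.
- by rewrite size_map size_iota.
Qed.

Lemma horner_ffact_poly j x : (ffact_poly j).[x] = \prod_(i < j) (x - i%:R).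
Proof. by rewrite horner_prod; apply: eq_bigr => i _; rewrite !hornerE. Qed.

Lemma horner_ffact_polyS0 j : (ffact_poly j.+1).[0] = 0.
Proof. by rewrite horner_ffact_poly big_ord_recl subrr mul0r. Qed.

Lemma ffact_poly_forward_diff j x :
  (ffact_poly j.+1).[x + 1] - (ffact_poly j.+1).[x]
  = (j.+1)%:R * (ffact_poly j).[x].
Proof.
rewrite !horner_ffact_poly big_ord_recl big_ord_recr /=.
have -> : \prod_(i < j) (x + 1 - (bump 0 i)%:R) = \prod_(i < j) (x - i%:R).
  by apply: eq_bigr => i _; rewrite /bump add1n -natr1; ring.
rewrite subr0; ring.
Qed.

Lemma forward_diff_expr (R : pzRingType) (x : R) m :
  (x + 1) ^+ m - x ^+ m = \sum_(i < m) x ^+ i *+ 'C(m, i).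
Proof. by rewrite exprD1n big_ord_recr /= binn addrK. Qed.

Section StirlingAntidifference.

Variable S : nat -> nat -> rat.
Hypothesis stirlingS : is_stirling2 S.

Definition powsum_stirling (p : nat) : {poly rat} :=
  \sum_(j < p.+1) (S p j / (j.+1)%:R) *: ffact_poly j.+1.

Lemma powsum_stirling0 p : (powsum_stirling p).[0] = 0.
Proof.
by rewrite horner_sum big1 // => j _; rewrite hornerZ horner_ffact_polyS0 mulr0.
Qed.

Lemma powsum_stirling_forward_diff p x :
  (powsum_stirling p).[x + 1] - (powsum_stirling p).[x] = x ^+ p.
Proof.
rewrite !horner_sum -sumrB -hornerXn stirlingS.1 horner_sum.
apply: eq_bigr => j _; rewrite !hornerZ -mulrBr ffact_poly_forward_diff.
by rewrite mulrA divfK ?pnatr_eq0.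
Qed.

Lemma int01_powsum_stirling p :
  int01 (powsum_stirling p) = \sum_(j < p.+1) S p j / (j.+1)%:R * bernoulli2 j.+1.
Proof. by rewrite linear_sum; apply: eq_bigr => j _; rewrite linearZ. Qed.

End StirlingAntidifference.

Section BernoulliAntidifference.

Variable B : nat -> rat.
Hypothesis bernoulliB : is_bernoulli B.

Lemma bernoulli_binomial_sum m :
  \sum_(k < m.+1) 'C(m.+1, k)%:R * B k = (m == 0%N)%:R.
Proof.
have := congr1 ( *%R^~ (m.+1)`!%:R) (bernoulliB m).
have -> : (m == 0%N)%:R * (m.+1)`!%:R = (m == 0%N)%:R :> rat.
  by case: eqP => [->|]; rewrite ?mul0r ?mul1r.
rewrite mulr_suml => <-; apply: eq_bigr => [[k /= ltkm]] _.
have lekm : (k <= m.+1)%N by apply: ltnW.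
rewrite -subSn // -(bin_fact lekm) !natrM.
have fact_neq0 l : (l`!%:R : rat) != 0 by rewrite pnatr_eq0 -lt0n fact_gt0.
by field; rewrite !fact_neq0.
Qed.

Definition powsum_bernoulli (p : nat) : {poly rat} :=
  \sum_(k < p.+1) ('C(p.+1, k)%:R * B k / (p.+1)%:R) *: 'X^(p.+1 - k).

Lemma powsum_bernoulli0 p : (powsum_bernoulli p).[0] = 0.
Proof.
rewrite horner_sum big1 // => k _.
by rewrite hornerZ hornerXn expr0n subn_eq0 leqNgt ltn_ord mulr0.
Qed.

Lemma powsum_bernoulli_forward_diff p x :
  (powsum_bernoulli p).[x + 1] - (powsum_bernoulli p).[x] = x ^+ p.
Proof.
set n := p.+1.
rewrite !horner_sum -sumrB.
under eq_bigr => k _ do rewrite !hornerZ !hornerXn -mulrBr forward_diff_expr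
  (big_ord_widen n (fun i => x ^+ i *+ 'C(n - k, i)) (leq_subr k n)) mulr_sumr.
rewrite (exchange_big_dep predT) //=.
(* By [C(n,i) C(n-i,j) = C(n,j) C(n-j,i)], the coefficient of [x^j] is a
   Bernoulli recurrence sum. *)
have inner (j : 'I_n) :
    \sum_(i < n | (j < n - i)%N) 'C(n, i)%:R * B i / n%:R * (x ^+ j *+ 'C(n - i, j))
    = x ^+ j * 'C(n, j)%:R / n%:R * (j == p :> nat)%:R.
  have /subSn lejp : (j <= p)%N by rewrite -ltnS.
  have -> : (j == p :> nat) = (p - j == 0)%N by rewrite subn_eq0 eqn_leq -ltnS ltn_ord.
  rewrite -bernoulli_binomial_sum -lejp mulr_sumr.
  rewrite (big_ord_widen n (fun i => x ^+ j * 'C(n, j)%:R / n%:R * ('C(n - j, i)%:R * B i)))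
    ?leq_subr //.
  apply: eq_big => [i | i _]; first by rewrite ltn_subCr.
  have swap := congr1 (fun c : nat => c%:R : rat) (mul_bin_subC n i j).
  rewrite /= !natrM in swap; rewrite -mulr_natr.
  transitivity ('C(n, i)%:R * 'C(n - i, j)%:R * (B i * x ^+ j / n%:R)); first by ring.
  by rewrite swap; ring.
under eq_bigr => j _ do rewrite inner.
rewrite big_ord_recr big1 /= => [|j _]; last by rewrite (ltn_eqF (ltn_ord j)) mulr0.
by rewrite eqxx binSn mulr1 add0r mulfK ?pnatr_eq0.
Qed.

Lemma int01_powsum_bernoulli p :
  int01 (powsum_bernoulli p) = - B p.+1 / (p.+1)%:R.
Proof.
(* [field] states its side conditions with [m.+1%:R] unfolded to [1 + m%:R]. *)
have natD_neq0 m n : (m.+1)%:R + n%:R != 0 :> rat by rewrite -natrD pnatr_eq0.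
have term (k : 'I_p.+1) :
    'C(p.+1, k)%:R * B k / (p.+1)%:R * (((p.+1 - k).+1)%:R)^-1
    = 'C(p.+2, k)%:R * B k / ((p.+1)%:R * (p.+2)%:R).
  have := congr1 (fun c : nat => c%:R : rat) (mul_bin_down p.+2 k).
  rewrite /= subSn 1?ltnW // !natrM => down.
  have -> : 'C(p.+2, k)%:R = (p.+2)%:R * 'C(p.+1, k)%:R / ((p.+1 - k).+1)%:R :> rat.
    by rewrite down mulrC mulKf // pnatr_eq0.
  by field; rewrite !(natD_neq0 0) !(natD_neq0 1).
rewrite linear_sum; under eq_bigr => k _ do rewrite linearZ /= int01Xn term.
rewrite -mulr_suml.
have := bernoulli_binomial_sum p.+1; rewrite big_ord_recr /= binSn.
move/eqP; rewrite addr_eq0 => /eqP ->.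
by field; rewrite !(natD_neq0 0) !(natD_neq0 1).
Qed.

End BernoulliAntidifference.

Theorem corollary1 (S : nat -> nat -> rat) (B : nat -> rat) :
  is_stirling2 S -> is_bernoulli B ->
  forall n : nat, (1 <= n)%N ->
    B n = - \sum_(1 <= k < n.+1) (n%:R / k%:R) * S n.-1 k.-1 * bernoulli2 k.
Proof.
move=> stirlingS bernoulliB [//|p] _.
have powsum_eq : powsum_stirling S p = powsum_bernoulli B p.
  apply: poly_eq_forward_diff => [|m]; first by rewrite powsum_stirling0 powsum_bernoulli0.
  by rewrite powsum_stirling_forward_diff // powsum_bernoulli_forward_diff.
have := int01_powsum_bernoulli B bernoulliB p.
rewrite -powsum_eq int01_powsum_stirling => int01_eq.
rewrite big_add1 big_mkord /=.
have -> : \sum_(j < p.+1) (p.+1)%:R / (j.+1)%:R * S p j * bernoulli2 j.+1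
    = (p.+1)%:R * \sum_(j < p.+1) S p j / (j.+1)%:R * bernoulli2 j.+1.
  by rewrite mulr_sumr; apply: eq_bigr => j _; ring.
by rewrite int01_eq mulrCA divff ?pnatr_eq0 // mulr1 opprK.
Qed.
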